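(* For $j\in\mathbb{N}$ let $G_j(v)=\frac{v^j}{1-e^{-v}}$ ($v\ne0$, extended analytically at $0$) and $\mathfrak{g}_j(v)=(e^v-1)^{j+1}G_j^{(j)}(v)$. Then the Maclaurin power series of $\mathfrak{g}_j$ is \[ \mathfrak{g}_j(v)=(j+1)!\sum_{k=0}^\infty C(j,k)\frac{v^k}{k!}, \] where \[ C(j,k)=k!\sum_{r=0}^{k}(-1)^{r+1}(r+1)(r+2)(r+j)!\,\frac{S(k-r,j+1)}{(k-r)!}\sum_{q=0}^{r+1}\frac{(-1)^q}{q+1}\,\frac{S(r+q+1,q)}{(r-q+1)!\,(r+q+1)!}. \]
   Context: $\mathbb{N}=\{1,2,3,\dots\}$. $S(n,k)$ denotes the Stirling numbers of the second kind, defined by $\frac{(e^v-1)^k}{k!}=\sum_{n=k}^\infty S(n,k)\frac{v^n}{n!}$, with $S(n,k)=0$ for $n<k$. *)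

From Stdlib Require Import Reals Arith Factorial.
From Coquelicot Require Import Coquelicot.
Open Scope R_scope.

(* Stirling numbers of the second kind S(n,k), via the standard recurrence
   S(0,0)=1, S(0,k+1)=0, S(n+1,0)=0, S(n+1,k+1)=(k+1)S(n,k+1)+S(n,k),
   which is equivalent to the EGF (e^v-1)^k/k! = sum_n S(n,k) v^n/n!. *)
Fixpoint stirling2 (n k : nat) : nat :=
  match n, k with
  | O, O => 1%nat
  | O, S _ => 0%nat
  | S _, O => 0%nat
  | S n', S k' => (S k' * stirling2 n' (S k') + stirling2 n' k')%nat
  end.

(* G_j(v) = v^j / (1 - e^{-v}) for v <> 0, extended analytically at 0
   (limit at 0 is 1 if j = 0 and 0 if j >= 1). *)
Definition G (j : nat) (v : R) : R :=
  if Req_EM_T v 0 then (match j with O => 1 | _ => 0 end)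
  else v ^ j / (1 - exp (- v)).

Definition gfrak (j : nat) (v : R) : R :=
  (exp v - 1) ^ (S j) * Derive_n (G j) j v.

Definition Ccoef (j k : nat) : R :=
  INR (fact k) *
  sum_n (fun r =>
    (-1) ^ (S r) * INR (S r) * INR (S (S r)) * INR (fact (r + j))
    * INR (stirling2 (k - r) (S j)) / INR (fact (k - r))
    * sum_n (fun q =>
        (-1) ^ q / INR (S q)
        * INR (stirling2 (r + q + 1) q)
        / (INR (fact (r - q + 1)) * INR (fact (r + q + 1))))
      (S r))
  k.

From Stdlib Require Import Reals Arith Lra Lia.
From Coquelicot Require Import Coquelicot.
From mathcomp Require all_boot all_order all_algebra Rstruct ring zify.
Open Scope R_scope.

(* Write [exp v - 1 = v F(v)] with [F(v) = \sum_m v^m / (m+1)!].  The power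
   series [b] with [F b = 1] has the explicit coefficients
   [b_n = (n+1)! \sum_q (-1)^q S(n+q,q) / ((q+1) (n-q)! (n+q)!)]: modulo
   [v^(n+1)], [1/F] is the binomial expansion of [(1 - (1 - F)^(n+1)) / F],
   and the coefficients of [F^q = ((e^v - 1)/v)^q] are Stirling numbers.
   Since [|b_n| <= 2^n], [G_(i+1)(v) = v^i b(-v)] is a power series near [0],
   so [G_j^(j)] is its termwise derivative and [g_j] is the Cauchy product of
   that series with [(e^v - 1)^(j+1) = \sum_m (j+1)! S(m,j+1) v^m / m!]. *)

Lemma locally_Rabs (x r : R) (P : R -> Prop) :
  0 < r -> (forall y, Rabs (y - x) < r -> P y) -> locally x P.
Proof. intros Hr HP. exists (mkposreal r Hr). exact HP. Qed.

Lemma ex_pseries_CV_radius_ge (a : nat -> R) (x : R) :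
  ex_pseries a x -> Rbar_le x (CV_radius a).
Proof.
intros Hx. apply (CV_radius_bounded a).
apply ex_series_lim_0, is_lim_seq_abs, is_lim_seq_Reals in Hx.
simpl in Hx. rewrite Rabs_R0 in Hx.
destruct (cauchy_bound _ (CV_Cauchy _ (exist _ 0 Hx))) as [M HM].
exists M. intros n. apply HM. exists n.
rewrite Rmult_comm, <- pow_n_pow. reflexivity.
Qed.

Lemma CV_radius_ge_inv (a : nat -> R) (c : R) :
  0 < c -> (forall n, Rabs (a n) <= c ^ n) -> Rbar_le (/ c) (CV_radius a).
Proof.
intros Hc Ha. apply (CV_radius_bounded a). exists 1. intros n.
assert (Hc' : 0 < / c) by (apply Rinv_0_lt_compat; exact Hc).
rewrite Rabs_mult, <- RPow_abs, (Rabs_right (/ c)) by lra.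
rewrite <- (pow1 n), <- (Rinv_r c), Rpow_mult_distr by lra.
apply Rmult_le_compat_r; [apply pow_le; lra | apply Ha].
Qed.

Lemma CV_radius_infinite (a : nat -> R) (f : R -> R) :
  (forall x, is_pseries a x (f x)) -> forall x, Rbar_lt (Rabs x) (CV_radius a).
Proof.
intros Ha x. apply Rbar_lt_le_trans with (Rabs x + 1); [simpl; lra|].
apply ex_pseries_CV_radius_ge. eexists. apply Ha.
Qed.

Lemma CV_radius_incr_n (a : nat -> R) (n : nat) :
  CV_radius (PS_incr_n a n) = CV_radius a.
Proof.
induction n as [|n IH]; [reflexivity|].
exact (eq_trans (CV_radius_incr_1 _) IH).
Qed.

Definition unit_coef (m : nat) : R := match m with O => 1 | S _ => 0 end.

Lemma is_pseries_unit_coef x : is_pseries unit_coef x 1.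
Proof.
apply (filterlim_ext (fun _ => 1)); [|apply filterlim_const].
intros n; induction n as [|n IH].
- now rewrite sum_O; simpl; rewrite scal_one.
- rewrite sum_Sn, <- IH. unfold plus, scal; simpl; unfold mult; simpl.
  now rewrite Rmult_0_r, Rplus_0_r.
Qed.

Definition expm1_div_coef (m : nat) : R := / INR (fact (S m)).

Definition expm1_coef : nat -> R := PS_incr_1 expm1_div_coef.

Definition expm1_pow_coef (n m : nat) : R :=
  INR (fact n) * INR (stirling2 m n) / INR (fact m).

(* [bernoulli_coef n = B_n / n!], by an explicit formula for the Bernoulli
   numbers. *)
Definition bernoulli_coef (n : nat) : R :=
  INR (fact (S n)) *
  sum_n (fun q => (-1) ^ q / INR (S q) * INR (stirling2 (n + q) q)
                  / (INR (fact (n - q)) * INR (fact (n + q)))) n.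

(* Formal power series are handled through their truncations: polynomials
   of degree below [M] sharing the first [M] coefficients. *)
Module TruncatedSeries.
Import all_boot all_order all_algebra Rstruct ring zify.
Import Order.TTheory GRing.Theory Num.Theory.
Local Open Scope ring_scope.

Lemma sum_n_big (f : nat -> R) n : sum_n f n = \sum_(i < n.+1) f i.
Proof.
elim: n => [|n IHn]; first by rewrite sum_O big_ord_recr big_ord0 /= add0r.
by rewrite sum_Sn IHn [RHS]big_ord_recr.
Qed.

Lemma PS_multE (a b : nat -> R) m :
  PS_mult a b m = \sum_(i < m.+1) a i * b (m - i)%N.
Proof. by rewrite /PS_mult sum_f_R0E big_mkord. Qed.

Lemma natr_fact_neq0 n : (n`!)%:R != 0 :> R.
Proof. by rewrite pnatr_eq0 -lt0n fact_gt0. Qed.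

Lemma expm1_div_coefE m : expm1_div_coef m = (m.+1`!)%:R^-1.
Proof. by rewrite /expm1_div_coef RinvE INRE factE. Qed.

Lemma expm1_pow_coefE n m :
  expm1_pow_coef n m = (n`!)%:R * (stirling2 m n)%:R / (m`!)%:R.
Proof. by rewrite /expm1_pow_coef RdivE RmultE !INRE !factE. Qed.

Definition expm1_div_poly M : {poly R} := \poly_(i < M) expm1_div_coef i.

Definition expm1_poly M : {poly R} := 'X * expm1_div_poly M.

Lemma coef_expm1_poly M i : (i <= M)%N -> (expm1_poly M)`_i = expm1_coef i.
Proof. by rewrite coefXM; case: i => [|i] //= Hi; rewrite coef_poly Hi. Qed.

Lemma coef_deriv_expm1_poly M i :
  (i < M)%N -> (expm1_poly M)^`()`_i = (1 + expm1_poly M)`_i.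
Proof.
move=> Hi; rewrite coef_deriv coefD coef1.
rewrite (@coef_expm1_poly M i.+1 Hi) (@coef_expm1_poly M i (ltnW Hi)) /expm1_coef /=.
case: i {Hi} => [|i] /=; rewrite !expm1_div_coefE.
  by rewrite mulr1n invr1 addr0.
rewrite add0r [(i.+2)`!]factS -mulr_natr natrM.
by field; rewrite natr_fact_neq0 /= -natrD pnatr_eq0.
Qed.

Lemma coefM_eq_low (p q q' : {poly R}) i :
  (forall l, (l <= i)%N -> q`_l = q'`_l) -> (p * q)`_i = (p * q')`_i.
Proof. by move=> Hq; rewrite !coefM; apply: eq_bigr => l _; rewrite Hq ?leq_subr. Qed.

(* Coefficientwise form of [(E^(q+1))' = (q+1) E^q (1 + E)] for [E = e^x - 1];
   it mirrors the recurrence of the Stirling numbers. *)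
Lemma coef_expm1_poly_exp_rec M q i : (i < M)%N ->
  i.+1%:R * ((expm1_poly M) ^+ q.+1)`_i.+1
  = q.+1%:R * (((expm1_poly M) ^+ q)`_i + ((expm1_poly M) ^+ q.+1)`_i).
Proof.
move=> Hi; have := coef_deriv ((expm1_poly M) ^+ q.+1) i.
rewrite deriv_exp /= coefMn mulrC mulr_natl => <-; rewrite mulr_natl.
congr (_ *+ _); rewrite (@coefM_eq_low _ _ (1 + expm1_poly M)); last first.
  by move=> l Hl; apply: coef_deriv_expm1_poly; apply: leq_ltn_trans Hl Hi.
by rewrite mulrDr mulr1 -exprSr coefD.
Qed.

Lemma coef_expm1_poly_exp M q i :
  (i <= M)%N -> ((expm1_poly M) ^+ q)`_i = expm1_pow_coef q i.
Proof.
rewrite expm1_pow_coefE; elim: q i => [|q IHq] i.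
  rewrite expr0 coef1; case: i => [|i] _ /=; last by rewrite mulr0 mul0r.
  by rewrite mulr1 divff ?natr_fact_neq0.
elim: i => [|i IHi] Hi.
  by rewrite exprSr coef0M coef_expm1_poly // mulr0 /= mulr0 mul0r.
have Hn : i.+1%:R != 0 :> R by rewrite pnatr_eq0.
apply: (mulfI Hn); rewrite coef_expm1_poly_exp_rec // IHq ?IHi 1?ltnW //.
rewrite [(q.+1)`!]factS [(i.+1)`!]factS [stirling2 i.+1 q.+1]/= !natrD !natrM.
by field; rewrite -natrM -natrD pnatr_eq0 -lt0n addn_gt0 fact_gt0 natr_fact_neq0.
Qed.

Lemma PS_mult_expm1_pow_coef n m :
  PS_mult (expm1_pow_coef n) expm1_coef m = expm1_pow_coef n.+1 m.
Proof.
rewrite PS_multE -(@coef_expm1_poly_exp m) // exprSr coefM.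
apply: eq_bigr => [[i Hi]] _ /=.
by rewrite coef_expm1_poly_exp ?coef_expm1_poly ?leq_subr.
Qed.

Lemma expm1_div_poly_coef0 M : (0 < M)%N -> (expm1_div_poly M)`_0 = 1.
Proof. by move=> HM; rewrite coef_poly HM expm1_div_coefE invr1. Qed.

Lemma coef_expm1_div_poly_exp M q m :
  (m + q <= M)%N -> (expm1_div_poly M ^+ q)`_m = expm1_pow_coef q (m + q).
Proof.
move=> Hm; rewrite -(@coef_expm1_poly_exp M) // exprMn coefXnM.
by rewrite ltnNge leq_addl addnK.
Qed.

Lemma coef_mul_low_eq0 (p q : {poly R}) m : p`_0 = 1 ->
  (forall i, (i <= m)%N -> (p * q)`_i = 0) -> forall i, (i <= m)%N -> q`_i = 0.
Proof.
move=> Hp0 Hpq; elim/ltn_ind => i IHi Him.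
have := Hpq i Him; rewrite coefM big_ord_recl Hp0 mul1r subn0 big1 ?addr0 //.
by move=> [l Hl] _ /=; rewrite /bump leq0n add1n IHi ?mulr0 //; lia.
Qed.

(* The binomial expansion of [(1 - (1 - F)^(n+1)) / F], [F = expm1_div_poly M]:
   since [1 - F] has no constant term, it inverts [F] up to degree [n]. *)
Definition expm1_div_inv_approx M n : {poly R} :=
  \sum_(q < n.+1) (- expm1_div_poly M) ^+ q *+ 'C(n.+1, q.+1).

Lemma mul_expm1_div_inv_approx M n :
  expm1_div_poly M * expm1_div_inv_approx M n
  = 1 - (1 - expm1_div_poly M) ^+ n.+1.
Proof.
rewrite exprDn big_ord_recl /= expr0 expr1n mul1r bin0 mulr1n.
rewrite opprD addrA subrr add0r mulr_sumr -sumrN.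
apply: eq_bigr => i _.
by rewrite /bump leq0n add1n expr1n mul1r mulrnAr exprS mulNr mulNrn opprK.
Qed.

Lemma coef_one_sub_expm1_div_exp M n m : (0 < M)%N -> (m <= n)%N ->
  ((1 - expm1_div_poly M) ^+ n.+1)`_m = 0.
Proof.
move=> HM Hmn.
have : root (1 - expm1_div_poly M) 0.
  by rewrite rootE horner_coef0 coefB coef1 expm1_div_poly_coef0 // subrr.
by move/factor_theorem => [p ->]; rewrite subr0 exprMn coefMXn ltnS Hmn.
Qed.

Lemma coef_expm1_div_inv_approx_stable M n m : (0 < M)%N -> (m <= n)%N ->
  (expm1_div_inv_approx M n)`_m = (expm1_div_inv_approx M m)`_m.
Proof.
move=> HM Hmn; apply/eqP; rewrite -subr_eq0 -coefB; apply/eqP.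
apply: (@coef_mul_low_eq0 (expm1_div_poly M) _ m) => // [|i Him].
  exact: expm1_div_poly_coef0.
rewrite mulrBr coefB !mul_expm1_div_inv_approx !coefB.
by rewrite !coef_one_sub_expm1_div_exp ?subrr // (leq_trans Him).
Qed.

Lemma coef_expm1_div_inv_approx_diag M n :
  (n + n <= M)%N -> (expm1_div_inv_approx M n)`_n = bernoulli_coef n.
Proof.
move=> HM; rewrite coef_sum /bernoulli_coef sum_n_big RmultE mulr_sumr.
apply: eq_bigr => -[q Hq] _.
rewrite !(RmultE, RdivE, RpowE, INRE, factE, plusE, minusE) /=.
rewrite coefMn -scaleN1r exprZn coefZ coef_expm1_div_poly_exp; last by lia.
rewrite expm1_pow_coefE -(bin_fact Hq) subSS [(q.+1)`!]factS.
rewrite -mulr_natr !natrM (_ : IZR (-1) = -1) //.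
by field; rewrite !natr_fact_neq0 nat1r pnatr_eq0.
Qed.

Lemma PS_mult_expm1_div_bernoulli m :
  PS_mult expm1_div_coef bernoulli_coef m = unit_coef m.
Proof.
pose M := (m + m).+1.
transitivity ((expm1_div_poly M * expm1_div_inv_approx M m)`_m).
  rewrite PS_multE coefM; apply: eq_bigr => -[i Hi] _ /=.
  rewrite coef_poly (_ : i < M)%N; last by rewrite /M; lia.
  rewrite coef_expm1_div_inv_approx_stable ?leq_subr //.
  by rewrite coef_expm1_div_inv_approx_diag // /M; lia.
rewrite mul_expm1_div_inv_approx coefB coef_one_sub_expm1_div_exp // subr0 coef1.
by case: m {M}.
Qed.

Lemma expm1_div_coef_ge0_le1 m : 0 <= expm1_div_coef m <= 1.
Proof.
have Hpos : 0 < (m.+1`!)%:R :> R by rewrite ltr0n fact_gt0.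
by rewrite expm1_div_coefE invr_ge0 ltW //= invf_le1 // ler1n fact_gt0.
Qed.

(* From [b_n = - \sum_(i < n) f_(n - i) b_i] with [0 <= f_k <= 1]. *)
Lemma bernoulli_coef_bound n : Rle (Rabs (bernoulli_coef n)) (pow 2 n).
Proof.
apply/RleP; rewrite RabsE RpowE (_ : IZR 2 = 2%:R); last first.
  by rewrite -[IZR 2]/(IZR (Z.of_nat 2)) -INR_IZR_INZ INRE.
elim/ltn_ind: n => n IHn.
have := PS_mult_expm1_div_bernoulli n.
rewrite PS_multE big_ord_recl subn0 expm1_div_coefE invr1 mul1r.
case: n IHn => [|n] IHn.
  by rewrite big_ord0 addr0 => ->; rewrite expr0 normr1.
move/eqP; rewrite addr_eq0 => /eqP ->; rewrite normrN.
apply: le_trans (ler_norm_sum _ _ _) _.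
apply: (@le_trans _ _ (\sum_(i < n.+1) 2%:R ^+ (n - i) * 1 ^+ i)).
  apply: ler_sum => i _; rewrite expr1n mulr1 !lift0 normrM.
  rewrite -[X in _ <= X]mul1r; apply: ler_pM => //.
    by case/andP: (expm1_div_coef_ge0_le1 i.+1) => ge0 le1; rewrite ger0_norm.
  by rewrite subSS; apply: IHn; rewrite ltnS leq_subr.
have := subrXX (2%:R : R) 1 n.+1; rewrite expr1n (_ : 2%:R - 1 = 1 :> R) ?mul1r.
  by move=> <-; rewrite gerBl.
by rewrite -[2%:R]/(1 + 1 : R) addrK.
Qed.
End TruncatedSeries.

Lemma is_pseries_expm1 x : is_pseries expm1_coef x (exp x - 1).
Proof.
apply is_series_decr_1.
apply (is_series_incr_1 (fun k => scal (pow_n x k) (/ INR (fact k)))).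
match goal with |- is_series _ ?l => replace l with (exp x) end.
- apply is_exp_Reals.
- unfold plus, opp, scal; simpl; unfold mult, one, zero; simpl.
  rewrite Rinv_1. ring.
Qed.

Lemma expm1_pow_coef_0 m : expm1_pow_coef 0 m = unit_coef m.
Proof.
destruct m; unfold expm1_pow_coef, unit_coef; simpl stirling2; simpl INR;
  [field | unfold Rdiv; ring].
Qed.

Lemma is_pseries_expm1_pow n x :
  is_pseries (expm1_pow_coef n) x ((exp x - 1) ^ n).
Proof.
revert x; induction n as [|n IH]; intros x.
- apply (is_series_ext (fun k => scal (pow_n x k) (unit_coef k))).
  + intros k. now rewrite expm1_pow_coef_0.
  + apply is_pseries_unit_coef.
- apply (is_series_ext (fun k => scal (pow_n x k)
           (PS_mult (expm1_pow_coef n) expm1_coef k))).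
  + intros k. now rewrite TruncatedSeries.PS_mult_expm1_pow_coef.
  + rewrite <- tech_pow_Rmult, Rmult_comm.
    apply is_pseries_mult; [apply IH | apply is_pseries_expm1 | |];
      eapply CV_radius_infinite; [apply IH | apply is_pseries_expm1].
Qed.

Lemma CV_radius_expm1_div x : Rbar_lt (Rabs x) (CV_radius expm1_div_coef).
Proof.
rewrite <- CV_radius_incr_1.
exact (CV_radius_infinite _ _ is_pseries_expm1 x).
Qed.

Lemma expm1_eq_mul_PSeries x : exp x - 1 = x * PSeries expm1_div_coef x.
Proof.
rewrite <- PSeries_incr_1. symmetry.
apply is_pseries_unique, is_pseries_expm1.
Qed.

Lemma CV_radius_bernoulli : Rbar_le (/ 2) (CV_radius bernoulli_coef).
Proof.
apply CV_radius_ge_inv; [lra | apply TruncatedSeries.bernoulli_coef_bound].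
Qed.

Lemma PSeries_expm1_div_mul_bernoulli x : Rabs x < / 2 ->
  PSeries expm1_div_coef x * PSeries bernoulli_coef x = 1.
Proof.
intros Hx.
assert (Hb : Rbar_lt (Rabs x) (CV_radius bernoulli_coef)).
{ apply Rbar_lt_le_trans with (/ 2); [exact Hx | apply CV_radius_bernoulli]. }
rewrite <- PSeries_mult by (apply CV_radius_expm1_div || exact Hb).
rewrite (PSeries_ext _ unit_coef)
  by exact TruncatedSeries.PS_mult_expm1_div_bernoulli.
apply is_pseries_unique, is_pseries_unit_coef.
Qed.

Definition bernoulli_neg_coef (n : nat) : R := (-1) ^ n * bernoulli_coef n.

Definition G_coef (i : nat) : nat -> R := PS_incr_n bernoulli_neg_coef i.

Lemma PSeries_bernoulli_neg v :
  PSeries bernoulli_neg_coef v = PSeries bernoulli_coef (- v).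
Proof.
apply Series_ext. intros n. unfold bernoulli_neg_coef.
replace (- v) with (-1 * v) by ring. rewrite Rpow_mult_distr. ring.
Qed.

Lemma CV_radius_G_coef i : Rbar_le (/ 2) (CV_radius (G_coef i)).
Proof.
unfold G_coef. rewrite CV_radius_incr_n.
apply CV_radius_ge_inv; [lra|]. intros n. unfold bernoulli_neg_coef.
rewrite Rabs_mult, <- RPow_abs, Rabs_m1, pow1, Rmult_1_l.
apply TruncatedSeries.bernoulli_coef_bound.
Qed.

Lemma G_eq_PSeries i v : v <> 0 -> Rabs v < / 2 ->
  G (S i) v = PSeries (G_coef i) v.
Proof.
intros Hv Hva. unfold G. destruct (Req_EM_T v 0) as [|_]; [contradiction|].
unfold G_coef. rewrite PSeries_incr_n, PSeries_bernoulli_neg.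
assert (HFB := PSeries_expm1_div_mul_bernoulli (- v)
                 ltac:(rewrite Rabs_Ropp; exact Hva)).
assert (HF : 1 - exp (- v) = v * PSeries expm1_div_coef (- v)).
{ replace (1 - exp (- v)) with (- (exp (- v) - 1)) by ring.
  rewrite expm1_eq_mul_PSeries. ring. }
assert (HF0 : PSeries expm1_div_coef (- v) <> 0).
{ intros E. rewrite E in HFB. lra. }
rewrite HF. simpl pow. field_simplify_eq; [| split; assumption].
rewrite Rmult_assoc, HFB. ring.
Qed.

Lemma Derive_n_G i v : v <> 0 -> Rabs v < / 2 ->
  Derive_n (G (S i)) (S i) v = PSeries (PS_derive_n (S i) (G_coef i)) v.
Proof.
intros Hv Hva.
assert (He : 0 < Rmin (Rabs v) (/ 2 - Rabs v)).
{ apply Rmin_pos; [apply Rabs_pos_lt; exact Hv | lra]. }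
rewrite (Derive_n_ext_loc _ (PSeries (G_coef i))).
- apply Derive_n_PSeries.
  apply Rbar_lt_le_trans with (/ 2); [exact Hva | apply CV_radius_G_coef].
- apply (locally_Rabs _ _ _ He). intros y Hy.
  generalize (Rmin_l (Rabs v) (/ 2 - Rabs v)) (Rmin_r (Rabs v) (/ 2 - Rabs v))
    (Rabs_triang_inv v y) (Rabs_triang_inv y v).
  rewrite (Rabs_minus_sym v y). intros.
  apply G_eq_PSeries; [intros ->; rewrite Rabs_R0 in * |]; lra.
Qed.

Definition gfrak_coef (i : nat) : nat -> R :=
  PS_mult (PS_derive_n (S i) (G_coef i)) (expm1_pow_coef (S (S i))).

Lemma gfrak_eq_PSeries i v : Rabs v < / 2 ->
  gfrak (S i) v = PSeries (gfrak_coef i) v.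
Proof.
intros Hva. destruct (Req_EM_T v 0) as [->|Hv].
- rewrite PSeries_0. unfold gfrak, gfrak_coef, PS_mult, expm1_pow_coef.
  simpl sum_f_R0. simpl stirling2.
  rewrite exp_0, Rminus_eq_0, pow_i by lia. unfold Rdiv.
  now rewrite !Rmult_0_r, !Rmult_0_l, Rmult_0_r.
- unfold gfrak, gfrak_coef.
  rewrite PSeries_mult, (Derive_n_G i v Hv Hva).
  + rewrite (is_pseries_unique _ _ _ (is_pseries_expm1_pow _ v)).
    apply Rmult_comm.
  + rewrite CV_radius_derive_n.
    apply Rbar_lt_le_trans with (/ 2); [exact Hva | apply CV_radius_G_coef].
  + eapply CV_radius_infinite, is_pseries_expm1_pow.
Qed.

Lemma Derive_n_gfrak_0 i k :
  Derive_n (gfrak (S i)) k 0 = gfrak_coef i k * INR (fact k).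
Proof.
assert (Hhalf : 0 < / 2) by lra.
rewrite (Derive_n_ext_loc _ (PSeries (gfrak_coef i))).
- apply Derive_n_coef.
  apply Rbar_lt_le_trans with (/ 4); [simpl; lra|].
  apply ex_pseries_CV_radius_ge, ex_pseries_mult.
  + rewrite CV_radius_derive_n.
    apply Rbar_lt_le_trans with (/ 2); [simpl; rewrite Rabs_right; lra|].
    apply CV_radius_G_coef.
  + eapply CV_radius_infinite, is_pseries_expm1_pow.
- apply (locally_Rabs _ _ _ Hhalf). intros y Hy.
  apply gfrak_eq_PSeries. now rewrite Rminus_0_r in Hy.
Qed.

Definition Ccoef_inner (r : nat) : R :=
  sum_n (fun q =>
        (-1) ^ q / INR (S q)
        * INR (stirling2 (r + q + 1) q)
        / (INR (fact (r - q + 1)) * INR (fact (r + q + 1))))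
      (S r).

Lemma bernoulli_coef_succ r :
  bernoulli_coef (S r) = INR (fact (S (S r))) * Ccoef_inner r.
Proof.
unfold bernoulli_coef, Ccoef_inner. f_equal. apply sum_n_ext_loc. intros q Hq.
replace (S r + q)%nat with (r + q + 1)%nat by lia.
destruct (Nat.eq_dec q (S r)) as [->|Hqr].
- replace (r - S r + 1)%nat with 1%nat by lia. now rewrite Nat.sub_diag.
- now replace (S r - q)%nat with (r - q + 1)%nat by lia.
Qed.

Lemma gfrak_coef_term i k r :
  PS_derive_n (S i) (G_coef i) r * expm1_pow_coef (S (S i)) (k - r) =
  INR (fact (S (S i))) *
  ((-1) ^ S r * INR (S r) * INR (S (S r)) * INR (fact (r + S i))
   * INR (stirling2 (k - r) (S (S i))) / INR (fact (k - r)) * Ccoef_inner r).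
Proof.
unfold PS_derive_n, G_coef. rewrite PS_incr_n_simplify.
destruct (le_lt_dec i (r + S i)) as [_|H]; [|lia].
replace (r + S i - i)%nat with (S r) by lia.
unfold bernoulli_neg_coef, expm1_pow_coef. rewrite bernoulli_coef_succ.
replace (fact (S (S r))) with (S (S r) * (S r * fact r))%nat by reflexivity.
rewrite !mult_INR. field. split; apply INR_fact_neq_0.
Qed.

Lemma gfrak_coef_eq i k :
  gfrak_coef i k = INR (fact (S (S i))) * Ccoef (S i) k / INR (fact k).
Proof.
unfold gfrak_coef, PS_mult, Ccoef. rewrite <- sum_n_Reals.
rewrite (sum_n_ext _ _ k (gfrak_coef_term i k)), (sum_n_mult_l (K := R_Ring)).
unfold Ccoef_inner. set (s := sum_n _ k). unfold mult; simpl.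
field. apply INR_fact_neq_0.
Qed.

Theorem theorem8p1 (j : nat) (hj : (1 <= j)%nat) :
  forall k : nat,
    Derive_n (gfrak j) k 0 / INR (fact k)
    = INR (fact (S j)) * Ccoef j k / INR (fact k).
Proof.
intros k. destruct j as [|i]; [lia|].
rewrite Derive_n_gfrak_0, gfrak_coef_eq.
field. apply INR_fact_neq_0.
Qed.
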